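(* Let $(\lambda,\nu,s)$ be a co-Pieri triple and let $n$ be sufficiently large compared with $r=|\lambda|+s$. For every partition $\alpha\vdash n-s$ with $\alpha\subseteq\lambda_{[n]}\cap\nu_{[n]}$, every element of $\mathrm{Std}_s(\nu_{[n]}\setminus\alpha)$ has the form $\mathsf p=(-\varepsilon_0,+\varepsilon_{j_1},\dots,-\varepsilon_0,+\varepsilon_{j_s})$ and every element of $\mathrm{Std}_s(\alpha\setminus\lambda_{[n]})$ has the form $\mathsf q=(-\varepsilon_{i_1},+\varepsilon_0,\dots,-\varepsilon_{i_s},+\varepsilon_0)$, with all $i_l,j_l\ge1$, and the rule $$\varphi_s(\mathsf p,\mathsf q)=(-\varepsilon_{i_1-1},+\varepsilon_{j_1-1},-\varepsilon_{i_2-1},+\varepsilon_{j_2-1},\dots,-\varepsilon_{i_s-1},+\varepsilon_{j_s-1})$$ defines a bijection $$\varphi_s:\bigsqcup_{\substack{\alpha\vdash n-s\\ \alpha\subseteq\lambda_{[n]}\cap\nu_{[n]}}}\mathrm{Std}_s(\nu_{[n]}\setminus\alpha)\times\mathrm{Std}_s(\alpha\setminus\lambda_{[n]})\longrightarrow\mathrm{Std}^+_s(\nu\setminus\lambda).$$ Moreover, for every $\mathsf u=\varphi_s(\mathsf p,\mathsf q)\in\mathrm{Std}^+_s(\nu\setminus\lambda)$ and every $1\le k\le s-1$, the tableaux $\mathsf p_{k\leftrightarrow k+1},\mathsf q_{k\leftrightarrow k+1}$ exist and $\varphi_s(\mathsf p_{k\leftrightarrow k+1},\mathsf q_{k\leftrightarrow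 k+1})=\mathsf u_{k\leftrightarrow k+1}\in\mathrm{Std}^+_s(\nu\setminus\lambda)$; hence $\mathsf u_{k\leftrightarrow k+1}$ exists for every $\mathsf u\in\mathrm{Std}^0_s(\nu\setminus\lambda)$ and every $1\le k\le s-1$.
   Context: For a partition $\lambda$: $|\lambda|$ size, $\ell(\lambda)$ number of nonzero parts; $\lambda_{[n]}=(n-|\lambda|,\lambda_1,\lambda_2,\dots)$. $\lambda\cap\nu$ is the componentwise minimum; for $\alpha\subseteq\beta$, $\beta\ominus\alpha$ is the difference of Young diagrams. $\pm\varepsilon_i$ ($i\ge1$) adds/removes a box in row $i$, $\varepsilon_0=0$. For partitions $\lambda,\nu$ and $s\ge0$ with $|\nu|\le|\lambda|+s$, $\mathrm{Std}_s(\nu\setminus\lambda)$ is the set of sequences $\mathsf t=(-\varepsilon_{i_1},+\varepsilon_{j_1},\dots,-\varepsilon_{i_s},+\varepsilon_{j_s})$, $i_k,j_k\ge0$, such that with $\mathsf t(0)=\lambda$, $\mathsf t(k-\frac12)=\mathsf t(k-1)-\varepsilon_{i_k}$, $\mathsf t(k)=\mathsf t(k-\frac12)+\varepsilon_{j_k}$ all are partitions and $\mathsf t(s)=\nu$; $(-\varepsilon_{i_k},+\varepsilon_{j_k})$ is the $k$-th integral step. $\mathrm{Std}^+_s(\nu\setminus\lambda)$ is the subset with $\#\{k:i_k=i\}\le\lambda_i$ for all $i\ge1$; $\mathrm{Std}^0_s(\nu\setminus\lambda)$ is the subset of $\mathrm{Std}^+_s(\nu\setminus\lambda)$ of those with no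 integral step $(-\varepsilon_0,+\varepsilon_0)$. $\mathsf t_{k\leftrightarrow k+1}$ is obtained by interchanging the $k$-th and $(k+1)$-th integral steps; it exists if it again lies in $\mathrm{Std}_s$ of the same shape. A co-Pieri triple is $(\lambda,\nu,s)$ with $|\nu|\le|\lambda|+s$, $\mathrm{Std}^0_s(\nu\setminus\lambda)\ne\emptyset$ and: $s=1$, or $s>1$ and, if $\max\{\ell(\lambda),\ell(\nu)\}\ge2$, $s\le\max\{|\lambda\ominus(\lambda\cap\nu)|,|\nu\ominus(\lambda\cap\nu)|\}+\min_{2\le i\le\max\{\ell(\lambda),\ell(\nu)\}}(\min\{\lambda_{i-1},\nu_{i-1}\}-\max\{\lambda_i,\nu_i\})$. *)

From mathcomp Require Import all_boot all_order all_algebra.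
Set Implicit Arguments. Unset Strict Implicit. Unset Printing Implicit Defensive.
Import Order.TTheory GRing.Theory Num.Theory.

(* A partition is a weakly decreasing finite sequence of positive integers
   (canonical representation: no trailing zeros).  lambda_i = nth 0 la i.-1. *)
Definition is_part (la : seq nat) : bool :=
  sorted geq la && all (fun x => 0 < x) la.

Definition row (la : seq nat) (i : nat) : nat := nth 0 la i.-1.

Definition part_n (n : nat) (la : seq nat) : seq nat := (n - sumn la) :: la.

Definition pcontained (al be : seq nat) : Prop :=
  forall i, (nth 0 al i <= nth 0 be i)%N.

Definition pmeet (la nu : seq nat) : seq nat :=
  [seq minn (nth 0 la i) (nth 0 nu i) | i <- iota 0 (minn (size la) (size nu))].

(* |beta \ominus alpha| for alpha = la \cap nu, beta = la *)
Definition skew_diff_size (la nu : seq nat) : nat :=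
  \sum_(i < maxn (size la) (size nu)) (nth 0 la i - minn (nth 0 la i) (nth 0 nu i)).

(* An integral step (-eps_i, +eps_j) is encoded as the pair (i, j);
   index 0 stands for eps_0 = 0. *)
Definition step := (nat * nat)%type.

Definition n_add (t : seq step) (k i : nat) : nat :=
  count (fun st : step => st.2 == i) (take k t).
Definition n_rem (t : seq step) (k i : nat) : nat :=
  count (fun st : step => st.1 == i) (take k t).

(* row i (i >= 1) of t(k), starting from t(0) = la *)
Definition shape_at (la : seq nat) (t : seq step) (k i : nat) : int :=
  (Posz (row la i) + Posz (n_add t k i) - Posz (n_rem t k i))%R.
(* row i (i >= 1) of t(k - 1/2) = t(k-1) - eps_{i_k} *)
Definition shape_half (la : seq nat) (t : seq step) (k i : nat) : int :=
  (Posz (row la i) + Posz (n_add t k.-1 i) - Posz (n_rem t k i))%R.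

Definition is_partition_rows (f : nat -> int) : Prop :=
  forall i, (1 <= i)%N -> (0 <= f i)%R /\ (f i.+1 <= f i)%R.

Definition Std (s : nat) (la nu : seq nat) (t : seq step) : Prop :=
  [/\ (sumn nu <= sumn la + s)%N, size t = s,
      (forall k, (1 <= k <= s)%N ->
         is_partition_rows (shape_half la t k) /\ is_partition_rows (shape_at la t k))
    & (forall i, (1 <= i)%N -> shape_at la t s i = Posz (row nu i))].

Definition Std_plus (s : nat) (la nu : seq nat) (t : seq step) : Prop :=
  Std s la nu t /\
  (forall i, (1 <= i)%N -> (count (fun st : step => st.1 == i) t <= row la i)%N).

Definition Std_zero (s : nat) (la nu : seq nat) (t : seq step) : Prop :=
  Std_plus s la nu t /\ (0, 0) \notin t.

(* t_{k <-> k+1}: interchange the k-th and (k+1)-th integral steps (1-indexed) *)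
Definition swap_steps (k : nat) (t : seq step) : seq step :=
  set_nth (0, 0) (set_nth (0, 0) t k.-1 (nth (0, 0) t k)) k (nth (0, 0) t k.-1).

Definition gap (la nu : seq nat) (i : nat) : int :=
  (Posz (minn (row la i.-1) (row nu i.-1)) - Posz (maxn (row la i) (row nu i)))%R.
Definition min_gap (la nu : seq nat) : int :=
  let L := maxn (size la) (size nu) in
  \big[Order.min/gap la nu 2]_(2 <= i < L.+1) gap la nu i.

Definition coPieri (la nu : seq nat) (s : nat) : Prop :=
  [/\ (sumn nu <= sumn la + s)%N,
      (exists t, Std_zero s la nu t)
    & (s = 1%N \/
       ((1 < s)%N /\
        ((2 <= maxn (size la) (size nu))%N ->
         (Posz s <= Posz (maxn (skew_diff_size la nu) (skew_diff_size nu la))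
                  + min_gap la nu)%R)))].

Definition phi (p q : seq step) : seq step :=
  [seq (x.2.1.-1, x.1.2.-1) | x <- zip p q].

(* the disjoint union indexing set: triples (alpha, p, q) *)
Definition phi_dom (n s : nat) (la nu : seq nat) (x : seq nat * seq step * seq step)
  : Prop :=
  let: (al, p, q) := x in
  [/\ is_part al, sumn al = (n - s)%N,
      pcontained al (pmeet (part_n n la) (part_n n nu)),
      Std s al (part_n n nu) p & Std s (part_n n la) al q].

From Pilot Require Import Defs.
From mathcomp Require Import all_boot all_order all_algebra zify.
Import Defs. (* so that [row] is the row of a partition, not mathcomp's matrix row *)
Import Order.TTheory GRing.Theory.
Set Implicit Arguments. Unset Strict Implicit. Unset Printing Implicit Defensive.

(* Counting boxes, for n large an element of Std_s(nu_[n] \ alpha) only adds boxes and an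
   element of Std_s(alpha \ la_[n]) only removes them, so phi_s, which shifts every index
   down by one row, loses no information: p and q are the lifts of u = phi_s(p, q), and
   alpha is la_[n] minus the removals of u, shifted down a row.  What remains is that all
   intermediate shapes are partitions.  For s > 1 the co-Pieri bound forces the numbers
   a_i, r_i of boxes added to and removed from row i by any u in Std^+_s to satisfy
   la_(i+1) + a_(i+1) + r_i <= la_i, and then every ordering of the steps of u, and of
   its lifts, is valid; this covers u, p, q and all their swaps at once.  For s = 1 there
   is a single intermediate shape to check. *)

Lemma count_take_leq (T : Type) (P : pred T) k (t : seq T) :
  count P (take k t) <= count P t.
Proof. by rewrite -{2}(cat_take_drop k t) count_cat leq_addr. Qed.

Lemma sum_eq_succ (x M : nat) : \sum_(i < M) (x == i.+1 : nat) = (0 < x <= M).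
Proof.
elim: M => [|M IH]; first by rewrite big_ord0; case: x.
rewrite big_ord_recr /= IH.
by case: x {IH} => [|x] //=; rewrite eqSS ltnS; case: ltngtP.
Qed.

Lemma sum_count_succ (T : Type) (f : T -> nat) (t : seq T) M :
  \sum_(i < M) count (fun a => f a == i.+1) t = count (fun a => 0 < f a <= M) t.
Proof.
elim: t => [|x t IH] /=; first by rewrite big1.
by rewrite big_split /= IH sum_eq_succ.
Qed.

Lemma sum_nth_sumn (s : seq nat) M : size s <= M -> \sum_(i < M) nth 0 s i = sumn s.
Proof.
elim: s M => [|x s IH] M s_M; first by rewrite big1 // => i; rewrite nth_nil.
by case: M s_M => // M s_M; rewrite big_ord_recl IH.
Qed.

Lemma sum_succ_pair_leq (g : nat -> nat) L a :
  a.+1 < L -> g a + g a.+1 <= \sum_(j < L) g j.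
Proof.
elim: L => [|L IH] //; rewrite ltnS leq_eqVlt big_ord_recr /= => /orP[/eqP aL|/IH a_L].
  by rewrite -aL leq_add2r big_ord_recr leq_addl.
exact: leq_trans a_L (leq_addr _ _).
Qed.

Definition adds (t : seq step) (i : nat) : nat := count (fun st : step => st.2 == i) t.
Definition rems (t : seq step) (i : nat) : nat := count (fun st : step => st.1 == i) t.

Lemma adds_perm (t t' : seq step) i : perm_eq t t' -> adds t i = adds t' i.
Proof. by move/permP; apply. Qed.

Lemma rems_perm (t t' : seq step) i : perm_eq t t' -> rems t i = rems t' i.
Proof. by move/permP; apply. Qed.

Definition ends_at (la nu : seq nat) (t : seq step) : Prop :=
  forall i, 1 <= i -> row nu i + rems t i = row la i + adds t i.

Lemma ends_at_perm la nu (t t' : seq step) :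
  perm_eq t t' -> ends_at la nu t -> ends_at la nu t'.
Proof. by move=> tt' e i /e; rewrite (adds_perm i tt') (rems_perm i tt'). Qed.

Lemma shape_at_size la nu (t : seq step) :
  ends_at la nu t -> forall i, 1 <= i -> shape_at la t (size t) i = Posz (row nu i).
Proof. by move=> e i /e; rewrite /shape_at /n_add /n_rem take_size /adds /rems; lia. Qed.

Lemma Std_ends_at s la nu (t : seq step) : Std s la nu t -> ends_at la nu t.
Proof.
by case=> _ <- _ fin i /fin; rewrite /shape_at /n_add /n_rem take_size /adds /rems; lia.
Qed.

(* Sum [ends_at] over the rows i >= 1: a step with both indices nonzero moves one box. *)
Lemma box_balance la nu (t : seq step) :
  ends_at la nu t -> sumn nu + adds t 0 = sumn la + rems t 0.
Proof.
move=> e; set M := size la + size nu + \max_(st <- t) (st.1 + st.2).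
have st_M st : st \in t -> (st.1 <= M) && (st.2 <= M).
  move=> st_t; have st_max : st.1 + st.2 <= \max_(st <- t) (st.1 + st.2).
    exact: leq_bigmax_seq.
  by apply/andP; split; rewrite /M; lia.
have nonzero_rows (f : step -> nat) :
    (forall st, st \in t -> f st <= M) ->
    \sum_(i < M) count (fun st => f st == i.+1) t = size t - count (fun st => f st == 0) t.
  move=> f_M; rewrite sum_count_succ -(count_predC (fun st => f st == 0) t) addKn.
  by apply: eq_in_count => st /f_M /= ->; rewrite andbT lt0n.
have rows_sum : \sum_(i < M) (row nu i.+1 + rems t i.+1) =
                \sum_(i < M) (row la i.+1 + adds t i.+1).
  by apply: eq_bigr => i _; apply: e.
move: rows_sum; rewrite !big_split /= !sum_nth_sumn ?/M; try lia.
rewrite /rems /adds !nonzero_rows => [|st /st_M /andP[]|st /st_M /andP[]] //.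
have := count_size (fun st : step => st.1 == 0) t.
have := count_size (fun st : step => st.2 == 0) t; lia.
Qed.

Lemma ends_at_sumn_leq la nu (t : seq step) :
  ends_at la nu t -> sumn nu <= sumn la + size t.
Proof.
by move/box_balance; have : rems t 0 <= size t := count_size _ t; lia.
Qed.

Lemma ends_at_pure_adds la nu (t : seq step) :
  ends_at la nu t -> sumn nu = sumn la + size t ->
  forall st, st \in t -> st.1 = 0 /\ 0 < st.2.
Proof.
move/box_balance=> bal t_sum.
have C0 : rems t 0 <= size t := count_size _ t.
have all_rem0 : rems t 0 = size t by lia.
have no_add0 : adds t 0 = 0 by lia.
have rem_all : all (fun st : step => st.1 == 0) t by rewrite all_count; apply/eqP.
have no_add : ~~ has (fun st : step => st.2 == 0) t.
  by rewrite has_count -leqNgt leqn0; apply/eqP.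
by move=> st st_t; rewrite lt0n (hasPn no_add) // (eqP (allP rem_all _ st_t)).
Qed.

Lemma ends_at_pure_rems la nu (t : seq step) :
  ends_at la nu t -> sumn la = sumn nu + size t ->
  forall st, st \in t -> 0 < st.1 /\ st.2 = 0.
Proof.
move/box_balance=> bal t_sum.
have A0 : adds t 0 <= size t := count_size _ t.
have all_add0 : adds t 0 = size t by lia.
have no_rem0 : rems t 0 = 0 by lia.
have add_all : all (fun st : step => st.2 == 0) t by rewrite all_count; apply/eqP.
have no_rem : ~~ has (fun st : step => st.1 == 0) t.
  by rewrite has_count -leqNgt leqn0; apply/eqP.
by move=> st st_t; rewrite lt0n (hasPn no_rem) // (eqP (allP add_all _ st_t)).
Qed.

Lemma partition_rows_ext (f g : nat -> int) :
  (forall i, 1 <= i -> f i = g i) -> is_partition_rows f -> is_partition_rows g.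
Proof. by move=> fg f_part i i1; rewrite -!fg //; apply: f_part. Qed.

Lemma partition_rows_shift (f : nat -> int) :
  is_partition_rows f -> is_partition_rows (fun i => f i.+1).
Proof. by move=> f_part i _; apply: f_part. Qed.

Lemma part_nthS_leq x i : is_part x -> nth 0 x i.+1 <= nth 0 x i.
Proof.
case/andP=> x_sorted _; case: (ltnP i.+1 (size x)) => [i_x|]; last by move/(nth_default 0)->.
have geq_trans : transitive geq by move=> a b c ba cb; apply: leq_trans cb ba.
by apply: (sorted_leq_nth geq_trans) => //; [exact: leqnn | exact: ltn_trans i_x].
Qed.

Lemma part_rows x : is_part x -> is_partition_rows (fun i => Posz (row x i)).
Proof. by move=> x_part [|i] // _; split=> //; rewrite lez_nat; apply: part_nthS_leq. Qed.

Lemma row1_leq_sumn x : row x 1 <= sumn x.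
Proof. by case: x => //= a x; rewrite leq_addr. Qed.

Lemma row_part_n1 n x : row (part_n n x) 1 = n - sumn x.
Proof. by []. Qed.

Lemma row_part_nS n x i : 1 <= i -> row (part_n n x) i.+1 = row x i.
Proof. by case: i. Qed.

Lemma part_n_rows n x :
  is_part x -> row x 1 + sumn x <= n -> is_partition_rows (fun i => Posz (row (part_n n x) i)).
Proof.
move=> x_part x_n [|[|i]] // _; split; rewrite ?lez_nat //.
  by rewrite row_part_nS // row_part_n1; lia.
by rewrite !row_part_nS //; have [] := part_rows x_part (ltn0Sn i).
Qed.

Lemma part_eq_nth a b : is_part a -> is_part b -> (forall i, nth 0 a i = nth 0 b i) -> a = b.
Proof.
move=> /andP[_ /allP a_pos] /andP[_ /allP b_pos] ab.
have size_ab : size a = size b.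
  apply/eqP; rewrite eqn_leq; apply/andP; split; rewrite leqNgt; apply/negP => lt_size.
    by have := a_pos _ (mem_nth 0 lt_size); rewrite ab nth_default.
  by have := b_pos _ (mem_nth 0 lt_size); rewrite -ab nth_default.
by apply: (eq_from_nth (x0 := 0)) => // i _; apply: ab.
Qed.

Fixpoint partition_of_rows (f : nat -> nat) (M : nat) : seq nat :=
  if M is M'.+1 then
    (if f 0 == 0 then [::] else f 0 :: partition_of_rows (fun i => f i.+1) M')
  else [::].

Lemma partition_of_rowsP (f : nat -> nat) M :
  (forall i, f i.+1 <= f i) -> f M = 0 ->
  is_part (partition_of_rows f M) /\ forall i, nth 0 (partition_of_rows f M) i = f i.
Proof.
have f_zero_after (g : nat -> nat) j : (forall i, g i.+1 <= g i) -> g j = 0 ->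
    forall i, nth 0 [::] i = g (j + i).
  move=> g_dec gj i; rewrite nth_nil; apply/esym/eqP; rewrite -leqn0 -gj.
  by elim: i => [|i IH]; rewrite ?addn0 // addnS (leq_trans (g_dec _)).
elim: M f => [|M IH] f f_dec fM /=; first by split=> // i; apply: (f_zero_after f 0).
case: eqP => [f0|f0]; first by split=> // i; apply: (f_zero_after f 0).
have [rest_part rest_nth] := IH (fun i => f i.+1) (fun i => f_dec i.+1) fM.
split; last by case.
case/andP: rest_part => rest_sorted rest_pos; apply/andP; split.
  case E: (partition_of_rows _ M) rest_sorted => [|y r] //= ->; rewrite andbT.
  by have := rest_nth 0; rewrite E /= => ->; apply: f_dec.
by rewrite /= rest_pos andbT lt0n; apply/eqP.
Qed.

(* Row i+1 can receive all its boxes while row i has lost all of its: then every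
   interleaving of the steps of t stays a partition. *)
Definition order_free (la : seq nat) (t : seq step) : Prop :=
  forall i, 1 <= i -> row la i.+1 + adds t i.+1 + rems t i <= row la i.

Lemma order_free_perm la (t t' : seq step) :
  perm_eq t t' -> order_free la t -> order_free la t'.
Proof.
by move=> tt' free i /free; rewrite (adds_perm _ tt') (rems_perm _ tt').
Qed.

Lemma order_free_rems_leq la (t : seq step) :
  order_free la t -> forall i, 1 <= i -> rems t i <= row la i.
Proof. by move=> free i /free; lia. Qed.

Lemma order_free_partition_rows la (t : seq step) (a c : nat -> nat) :
  order_free la t -> (forall i, a i <= adds t i) -> (forall i, c i <= rems t i) ->
  is_partition_rows (fun i => Posz (row la i) + Posz (a i) - Posz (c i))%R.
Proof.
move=> free a_le c_le i i1; have := free i i1.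
have := a_le i; have := a_le i.+1; have := c_le i; have := c_le i.+1; split; lia.
Qed.

Lemma Std_of_order_free la nu (t : seq step) :
  order_free la t -> ends_at la nu t -> Std (size t) la nu t.
Proof.
move=> free e; split; [exact: ends_at_sumn_leq | by [] | | exact: shape_at_size].
by move=> k _; split; apply: order_free_partition_rows free _ _ => i; apply: count_take_leq.
Qed.

Lemma Std_plus_of_order_free la nu (t : seq step) :
  order_free la t -> ends_at la nu t -> Std_plus (size t) la nu t.
Proof.
by move=> free e; split; [apply: Std_of_order_free | apply: order_free_rems_leq].
Qed.

Lemma Std_one la nu (t : seq step) :
  size t = 1 -> ends_at la nu t -> is_partition_rows (fun i => Posz (row nu i)) ->
  is_partition_rows (fun i => Posz (row la i) - Posz (rems t i))%R -> Std 1 la nu t.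
Proof.
move=> t1 e nu_rows half_rows; rewrite -t1.
split; [exact: ends_at_sumn_leq | by [] | | exact: shape_at_size].
move=> k; rewrite t1 => /andP[k1 k_le]; have -> : k = 1 by lia.
split; last by apply: partition_rows_ext nu_rows => i i1; rewrite -t1 (shape_at_size e).
apply: partition_rows_ext half_rows => i _.
by rewrite /shape_half /n_add /n_rem take0 -t1 take_size addr0.
Qed.

Lemma Std_one_half la nu (t : seq step) :
  Std 1 la nu t -> is_partition_rows (fun i => Posz (row la i) - Posz (rems t i))%R.
Proof.
case=> _ t1 steps _; apply: partition_rows_ext (steps 1 isT).1 => i _.
by rewrite /shape_half /n_add /n_rem take0 -t1 take_size addr0.
Qed.

Lemma min_gap_leq la nu j :
  2 <= j <= maxn (size la) (size nu) -> (min_gap la nu <= gap la nu j)%R.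
Proof.
move=> j_range; apply: (@ge_bigmin_seq _ _ _ _ _ j) => //.
by rewrite mem_index_iota ltnS.
Qed.

Lemma skew_diff_size_balance la nu (f g : nat -> nat) :
  (forall i, 1 <= i -> row nu i + f i = row la i + g i) ->
  skew_diff_size la nu =
    \sum_(j < maxn (size la) (size nu)) (f j.+1 - minn (f j.+1) (g j.+1)).
Proof.
move=> bal; apply: eq_bigr => j _.
by have := bal j.+1 (ltn0Sn _); rewrite /row /=; lia.
Qed.

Lemma skew_diff_size_add_mins la nu (f g : nat -> nat) S i :
  (forall i, 1 <= i -> row nu i + f i = row la i + g i) ->
  \sum_(j < maxn (size la) (size nu)) f j.+1 <= S ->
  1 <= i < maxn (size la) (size nu) ->
  skew_diff_size la nu + minn (f i) (g i) + minn (f i.+1) (g i.+1) <= S.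
Proof.
move=> bal f_S /andP[i1 iL]; rewrite (skew_diff_size_balance bal) -addnA.
have := @sum_succ_pair_leq (fun j => minn (f j.+1) (g j.+1)) _ i.-1.
rewrite prednK // => /(_ _ iL) mins_le.
apply: leq_trans f_S; apply: leq_trans (leq_add (leqnn _) mins_le) _.
by rewrite -big_split /=; apply: leq_sum => j _; rewrite subnK // geq_minl.
Qed.

Lemma sum_adds_leq (t : seq step) L : \sum_(j < L) adds t j.+1 <= size t.
Proof. by rewrite /adds (sum_count_succ (fun st : step => st.2)) count_size. Qed.

Lemma sum_rems_leq (t : seq step) L : \sum_(j < L) rems t j.+1 <= size t.
Proof. by rewrite /rems (sum_count_succ (fun st : step => st.1)) count_size. Qed.

(* Writing m_i = min(adds_i, rems_i), the skew sizes are sums of rems_i - m_i (resp.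
   adds_i - m_i), so the co-Pieri bound forces m_i + m_(i+1) <= gap (i+1), which is
   [order_free] at row i. *)
Lemma order_free_of_gap la nu (t : seq step) :
  ((2 <= maxn (size la) (size nu))%N ->
   (Posz (size t) <= Posz (maxn (skew_diff_size la nu) (skew_diff_size nu la))
                     + min_gap la nu)%R) ->
  ends_at la nu t -> (forall i, 1 <= i -> rems t i <= row la i) -> order_free la t.
Proof.
move=> gap_bound e rems_le i i1.
have := e i i1; have := e i.+1 isT; have := rems_le i i1; have := rems_le i.+1 isT.
case: (ltnP i (maxn (size la) (size nu))) => [iL | Li].
  have := gap_bound (leq_ltn_trans i1 iL).
  have := @min_gap_leq la nu i.+1; rewrite ltnS i1 => /(_ iL).
  have i_range : 1 <= i < maxn (size la) (size nu) by rewrite i1.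
  have := @skew_diff_size_add_mins la nu (rems t) (adds t) _ i e (sum_rems_leq t _) i_range.
  have e' : forall j, 1 <= j -> row la j + adds t j = row nu j + rems t j.
    by move=> j /e ->.
  rewrite maxnC in i_range.
  have := @skew_diff_size_add_mins nu la (adds t) (rems t) _ i e' (sum_adds_leq t _) i_range.
  rewrite /gap /=; lia.
have la_end : row la i.+1 = 0 by rewrite /row nth_default //; apply: leq_trans Li; apply: leq_maxl.
have nu_end : row nu i.+1 = 0 by rewrite /row nth_default //; apply: leq_trans Li; apply: leq_maxr.
lia.
Qed.

Lemma coPieri_order_free la nu s (t : seq step) :
  coPieri la nu s -> 1 < s -> size t = s -> ends_at la nu t ->
  (forall i, 1 <= i -> rems t i <= row la i) -> order_free la t.
Proof.
case=> _ _ [-> // | [_ gap_bound]] _ t_s; apply: order_free_of_gap.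
by rewrite t_s.
Qed.

Definition lift_adds (u : seq step) : seq step := [seq (0, st.2.+1) | st <- u].
Definition lift_rems (u : seq step) : seq step := [seq (st.1.+1, 0) | st <- u].

Lemma phi_lifts (u : seq step) : phi (lift_adds u) (lift_rems u) = u.
Proof. by elim: u => [|[a b] u IH] //; rewrite /phi /= in IH *; rewrite IH. Qed.

Lemma lift_adds_phi (p q : seq step) :
  size p = size q -> (forall st, st \in p -> st.1 = 0 /\ 0 < st.2) -> lift_adds (phi p q) = p.
Proof.
elim: p q => [|[a b] p IH] [|y q] //= [/IH {}IH] pure.
have [/= -> /prednK b_pos] := pure _ (mem_head _ _).
rewrite /lift_adds /phi /= in IH *; rewrite b_pos IH // => st st_p.
by apply: pure; rewrite inE st_p orbT.
Qed.

Lemma lift_rems_phi (p q : seq step) :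
  size p = size q -> (forall st, st \in q -> 0 < st.1 /\ st.2 = 0) -> lift_rems (phi p q) = q.
Proof.
elim: p q => [|x p IH] [|[a b] q] //= [/IH {}IH] pure.
have [/prednK a_pos /= ->] := pure _ (mem_head _ _).
rewrite /lift_rems /phi /= in IH *; rewrite a_pos IH // => st st_q.
by apply: pure; rewrite inE st_q orbT.
Qed.

Lemma size_lift_adds u : size (lift_adds u) = size u.
Proof. exact: size_map. Qed.

Lemma size_lift_rems u : size (lift_rems u) = size u.
Proof. exact: size_map. Qed.

Lemma adds_lift_adds u i : adds (lift_adds u) i.+1 = adds u i.
Proof. by rewrite /adds count_map. Qed.

Lemma rems_lift_adds u i : rems (lift_adds u) i.+1 = 0.
Proof. by rewrite /rems count_map; elim: u. Qed.

Lemma rems_lift_rems u i : rems (lift_rems u) i.+1 = rems u i.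
Proof. by rewrite /rems count_map. Qed.

Lemma adds_lift_rems u i : adds (lift_rems u) i.+1 = 0.
Proof. by rewrite /adds count_map; elim: u. Qed.

Lemma rems0_lift_rems u : rems (lift_rems u) 0 = 0.
Proof. by rewrite /rems count_map; elim: u. Qed.

Lemma adds0_lift_rems u : adds (lift_rems u) 0 = size u.
Proof. by rewrite /adds count_map; elim: u => //= st u ->. Qed.

(* Row i+1 of [al] is row i+1 of la_[n] minus the boxes that u removes from row i, and
   row i+1 of nu_[n] minus the boxes that u adds to row i (row 0 of u being the long
   first row of la_[n] and nu_[n]). *)
Definition is_middle (n : nat) (la nu : seq nat) (u : seq step) (al : seq nat) : Prop :=
  forall i, row al i.+1 + rems u i = row (part_n n la) i.+1 /\
            row al i.+1 + adds u i = row (part_n n nu) i.+1.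

Lemma middle_lifts n la nu u al :
  is_middle n la nu u al <->
  ends_at al (part_n n nu) (lift_adds u) /\ ends_at (part_n n la) al (lift_rems u).
Proof.
split=> [mid | [ends_p ends_q] i].
  split=> -[|i] // _; have [] := mid i.
    by rewrite rems_lift_adds adds_lift_adds; lia.
  by rewrite rems_lift_rems adds_lift_rems; lia.
have := ends_p i.+1 isT; have := ends_q i.+1 isT.
rewrite rems_lift_adds adds_lift_adds rems_lift_rems adds_lift_rems; split; lia.
Qed.

Lemma middle_perm n la nu (u v : seq step) al :
  perm_eq u v -> is_middle n la nu u al -> is_middle n la nu v al.
Proof. by move=> uv mid i; rewrite -(adds_perm _ uv) -(rems_perm _ uv). Qed.

Lemma middle_ends_at n la nu u al : is_middle n la nu u al -> ends_at la nu u.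
Proof. by move=> mid i i1; have [] := mid i; rewrite !row_part_nS //; lia. Qed.

Lemma middle_rems_leq n la nu u al :
  is_middle n la nu u al -> forall i, 1 <= i -> rems u i <= row la i.
Proof. by move=> mid i i1; have [] := mid i; rewrite !row_part_nS //; lia. Qed.

Lemma sumn_middle n la nu u al :
  sumn la <= n -> is_middle n la nu u al -> sumn al + size u = n.
Proof.
move=> la_n /middle_lifts[_ /box_balance].
by rewrite rems0_lift_rems adds0_lift_rems /=; lia.
Qed.

Lemma nth_pmeet a b i : nth 0 (pmeet a b) i = minn (nth 0 a i) (nth 0 b i).
Proof.
rewrite /pmeet; case: (ltnP i (minn (size a) (size b))) => i_size.
  by rewrite (nth_map 0) ?size_iota // nth_iota.
rewrite nth_default ?size_map ?size_iota //.
by move: i_size; rewrite geq_min => /orP[|] /(nth_default 0) ->; rewrite ?minn0 ?min0n.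
Qed.

Lemma middle_pcontained n la nu u al :
  is_middle n la nu u al -> pcontained al (pmeet (part_n n la) (part_n n nu)).
Proof.
by move=> mid i; rewrite nth_pmeet leq_min; have [] := mid i; rewrite /row /=; lia.
Qed.

Lemma middle_unique n la nu u al al' :
  is_part al -> is_part al' -> is_middle n la nu u al -> is_middle n la nu u al' -> al = al'.
Proof.
move=> al_part al'_part mid mid'; apply: part_eq_nth => // i.
by have [] := mid i; have [] := mid' i; rewrite /row /=; lia.
Qed.

Lemma order_free_lift_adds n la nu u al :
  order_free la u -> is_middle n la nu u al -> row nu 1 <= row al 1 ->
  order_free al (lift_adds u).
Proof.
move=> free mid nu_al [|[|i]] // _; rewrite adds_lift_adds rems_lift_adds.
  by have [_] := mid 1; rewrite row_part_nS //; lia.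
have := free i.+1 isT; have [] := mid i.+1; have [] := mid i.+2.
by rewrite !row_part_nS //; lia.
Qed.

Lemma order_free_lift_rems n la u :
  order_free la u -> row la 1 + rems u 0 + sumn la <= n ->
  order_free (part_n n la) (lift_rems u).
Proof.
move=> free la_n [|[|i]] // _; rewrite adds_lift_rems rems_lift_rems.
  by rewrite row_part_nS // row_part_n1; lia.
by have := free i.+1 isT; rewrite !row_part_nS //; lia.
Qed.

Lemma Std_lifts n la nu u al :
  order_free la u -> is_middle n la nu u al -> 2 * (sumn la + sumn nu) + size u <= n ->
  Std (size u) al (part_n n nu) (lift_adds u) /\ Std (size u) (part_n n la) al (lift_rems u).
Proof.
move=> free mid n_large; move/middle_lifts: (mid) => [ends_p ends_q].
have al1 : row al 1 + rems u 0 = n - sumn la := (mid 0).1.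
have C0 : rems u 0 <= size u := count_size _ u.
have la1 := row1_leq_sumn la; have nu1 := row1_leq_sumn nu.
have nu_al : row nu 1 <= row al 1 by lia.
have la_n : row la 1 + rems u 0 + sumn la <= n by lia.
rewrite -{1}(size_lift_adds u) -{1}(size_lift_rems u); split.
  exact: Std_of_order_free (order_free_lift_adds free mid nu_al) ends_p.
exact: Std_of_order_free (order_free_lift_rems free la_n) ends_q.
Qed.

Lemma Std_one_lifts n la nu u al :
  size u = 1 -> is_part al -> is_part nu -> row nu 1 + sumn nu <= n ->
  is_middle n la nu u al ->
  Std 1 al (part_n n nu) (lift_adds u) /\ Std 1 (part_n n la) al (lift_rems u).
Proof.
move=> u1 al_part nu_part nu_n mid; move/middle_lifts: (mid) => [ends_p ends_q].
split; apply: Std_one; rewrite ?size_lift_adds ?size_lift_rems //.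
- exact: part_n_rows.
- apply: partition_rows_ext (part_rows al_part) => -[|i] // _.
  by rewrite rems_lift_adds subr0.
- exact: part_rows.
- apply: partition_rows_ext (part_rows al_part) => -[|i] // _.
  by rewrite rems_lift_rems; have [] := mid i; lia.
Qed.

Lemma Std_plus_of_middle n la nu u al :
  is_part al -> is_part nu -> coPieri la nu (size u) -> is_middle n la nu u al ->
  Std_plus (size u) la nu u.
Proof.
move=> al_part nu_part cp mid.
have ends_u := middle_ends_at mid; have rems_le := middle_rems_leq mid.
have [_ _ [u1 | [u_gt1 _]]] := cp; last first.
  exact: Std_plus_of_order_free (coPieri_order_free cp u_gt1 _ ends_u rems_le) ends_u.
split=> //; rewrite u1; apply: Std_one => //; first exact: part_rows.
apply: partition_rows_ext (partition_rows_shift (part_rows al_part)) => i i1.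
by have [] := mid i; rewrite row_part_nS //; lia.
Qed.

Lemma Std_pure_adds s al be (p : seq step) :
  Std s al be p -> sumn be = sumn al + s -> forall st, st \in p -> st.1 = 0 /\ 0 < st.2.
Proof. by move=> S_p; have [_ <- _ _] := S_p; apply: ends_at_pure_adds (Std_ends_at S_p). Qed.

Lemma Std_pure_rems s la al (q : seq step) :
  Std s la al q -> sumn la = sumn al + s -> forall st, st \in q -> 0 < st.1 /\ st.2 = 0.
Proof. by move=> S_q; have [_ <- _ _] := S_q; apply: ends_at_pure_rems (Std_ends_at S_q). Qed.

Lemma phi_dom_spec n s la nu al (p q : seq step) :
  sumn la <= n -> sumn nu <= n -> s <= n -> phi_dom n s la nu (al, p, q) ->
  exists u, [/\ size u = s, p = lift_adds u, q = lift_rems u & is_middle n la nu u al].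
Proof.
move=> la_n nu_n s_n [_ al_sum _ S_p S_q].
have [_ p_s _ _] := S_p; have [_ q_s _ _] := S_q.
have pure_p := Std_pure_adds S_p (ltac:(rewrite /= al_sum; lia)).
have pure_q := Std_pure_rems S_q (ltac:(rewrite /= al_sum; lia)).
have pq : size p = size q by rewrite p_s q_s.
have p_lift := lift_adds_phi pq pure_p; have q_lift := lift_rems_phi pq pure_q.
exists (phi p q); split=> //; first by rewrite size_map size_zip pq minnn.
by apply/middle_lifts; rewrite p_lift q_lift; split; [exact: Std_ends_at S_p | exact: Std_ends_at S_q].
Qed.

Lemma middle_exists n la nu s u :
  coPieri la nu s -> Std_plus s la nu u -> 2 * (sumn la + sumn nu) + s <= n ->
  exists2 al, is_part al & is_middle n la nu u al.
Proof.
move=> cp [S_u rems_le] n_large; have [_ u_s _ _] := S_u; have ends_u := Std_ends_at S_u.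
have {}rems_le : forall i, 1 <= i -> rems u i <= row la i := rems_le.
have LC_rows : is_partition_rows (fun i => Posz (row la i) - Posz (rems u i))%R.
  have [_ _ [s1 | [s_gt1 _]]] := cp; first by rewrite s1 in S_u; exact: Std_one_half S_u.
  have free := coPieri_order_free cp s_gt1 u_s ends_u rems_le.
  apply: partition_rows_ext (@order_free_partition_rows la u (fun _ => 0) (rems u) free
                               (fun _ => leq0n _) (fun _ => leqnn _)) => i _.
  by rewrite addr0.
pose rr i := if i is j.+1 then row la j.+1 - rems u j.+1 else n - sumn la - rems u 0.
have C0 : rems u 0 <= s by rewrite -u_s; apply: count_size.
have la1 := row1_leq_sumn la.
have rr_dec i : rr i.+1 <= rr i.
  case: i => [|i]; rewrite /rr; first by lia.
  by have := LC_rows i.+1 isT; have := rems_le i.+1 isT; have := rems_le i.+2 isT; lia.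
have rr_end : rr (size la).+1 = 0 by rewrite /rr /row nth_default.
have [al_part al_nth] := partition_of_rowsP rr_dec rr_end.
set al := partition_of_rows rr (size la).+1.
have row_al j : row al j.+1 = rr j := al_nth j.
exists al => // -[|i]; rewrite !row_al /rr.
  by have := box_balance ends_u; rewrite !row_part_n1; split; lia.
by have := ends_u i.+1 isT; have := rems_le i.+1 isT; rewrite !row_part_nS //; split; lia.
Qed.

Lemma phi_surj n s la nu u :
  is_part nu -> coPieri la nu s -> 2 * (sumn la + sumn nu) + s <= n -> Std_plus s la nu u ->
  exists x, phi_dom n s la nu x /\ phi x.1.2 x.2 = u.
Proof.
move=> nu_part cp n_large u_plus; have [al al_part mid] := middle_exists cp u_plus n_large.
have [[_ u_s _ _] _] := u_plus; have nu1 := row1_leq_sumn nu.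
have [S_p S_q] : Std s al (part_n n nu) (lift_adds u) /\ Std s (part_n n la) al (lift_rems u).
  have [_ _ [s1 | [s_gt1 _]]] := cp.
    by rewrite s1 in u_s *; apply: Std_one_lifts => //; lia.
  have free := coPieri_order_free cp s_gt1 u_s (middle_ends_at mid) (middle_rems_leq mid).
  by rewrite -u_s; apply: (Std_lifts free mid); lia.
exists (al, lift_adds u, lift_rems u); split; last exact: phi_lifts.
split=> //; last exact: middle_pcontained mid.
by have := sumn_middle (ltac:(lia) : sumn la <= n) mid; rewrite u_s; lia.
Qed.

Lemma swap_steps_cat (a b : seq step) x y :
  swap_steps (size a).+1 (a ++ x :: y :: b) = a ++ y :: x :: b.
Proof.
have set_nth_cat (c : seq step) i v :
    set_nth (0, 0) (a ++ c) (size a + i) v = a ++ set_nth (0, 0) c i v.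
  by elim: a => //= z a ->.
have nth_x : nth (0, 0) (a ++ [:: x, y & b]) (size a) = x by rewrite nth_cat ltnn subnn.
have nth_y : nth (0, 0) (a ++ [:: x, y & b]) (size a).+1 = y.
  by rewrite nth_cat ltnNge leqnSn /= subSnn.
rewrite /swap_steps /= nth_x nth_y -[size a]addn0 set_nth_cat /= addn0 -addn1.
by rewrite set_nth_cat.
Qed.

Lemma swap_steps_split (t : seq step) k : 1 <= k < size t ->
  exists a x y b, [/\ size a = k.-1, t = a ++ x :: y :: b & swap_steps k t = a ++ y :: x :: b].
Proof.
case/andP=> k1 k_t; exists (take k.-1 t), (nth (0, 0) t k.-1), (nth (0, 0) t k), (drop k.+1 t).
have t_split : t = take k.-1 t ++ nth (0, 0) t k.-1 :: nth (0, 0) t k :: drop k.+1 t.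
  rewrite -{1}(cat_take_drop k.-1 t) (drop_nth (0, 0)); last by rewrite prednK // ltnW.
  by rewrite (drop_nth (0, 0) (n := k.-1.+1)) prednK.
have size_take_t : size (take k.-1 t) = k.-1 by rewrite size_take prednK // ltnW.
split=> //; rewrite {1}t_split -{1}(prednK k1) -{1}size_take_t; exact: swap_steps_cat.
Qed.

Lemma perm_swap_steps (t : seq step) k : 1 <= k < size t -> perm_eq t (swap_steps k t).
Proof.
case/swap_steps_split=> a [x [y [b [_ -> ->]]]].
by rewrite perm_cat2l; apply/permP => P /=; rewrite addnCA.
Qed.

Lemma swap_steps_map (f : step -> step) (t : seq step) k :
  1 <= k < size t -> swap_steps k (map f t) = map f (swap_steps k t).
Proof.
move=> k_t; have k1 : 1 <= k by case/andP: k_t.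
have [a [x [y [b [a_k -> ->]]]]] := swap_steps_split k_t.
rewrite !map_cat /= -(prednK k1) -a_k -(size_map f a); exact: swap_steps_cat.
Qed.

Lemma Std_plus_swap la nu s u k :
  coPieri la nu s -> Std_plus s la nu u -> 1 <= k <= s - 1 ->
  Std_plus s la nu (swap_steps k u).
Proof.
move=> cp [S_u rems_le] /andP[k1 k_s]; have [_ u_s _ _] := S_u; have ends_u := Std_ends_at S_u.
have free := coPieri_order_free cp (ltac:(lia) : 1 < s) u_s ends_u rems_le.
have perm : perm_eq u (swap_steps k u) by apply: perm_swap_steps; rewrite k1 u_s; lia.
rewrite -u_s (perm_size perm); apply: Std_plus_of_order_free.
  exact: order_free_perm perm free.
exact: ends_at_perm perm ends_u.
Qed.

Lemma swap_lifts n la nu s u al k :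
  coPieri la nu s -> 2 * (sumn la + sumn nu) + s <= n -> size u = s ->
  is_middle n la nu u al -> 1 <= k <= s - 1 ->
  let p := lift_adds u in let q := lift_rems u in
  [/\ Std s al (part_n n nu) (swap_steps k p), Std s (part_n n la) al (swap_steps k q),
      phi (swap_steps k p) (swap_steps k q) = swap_steps k (phi p q)
    & Std_plus s la nu (swap_steps k (phi p q))].
Proof.
move=> cp n_large u_s mid /andP[k1 k_s] /=.
have k_u : 1 <= k < size u by rewrite k1 u_s; lia.
rewrite phi_lifts !swap_steps_map // phi_lifts.
have perm := perm_swap_steps k_u; have v_s : size (swap_steps k u) = s by rewrite -(perm_size perm).
have s_gt1 : 1 < s by lia.
have free := order_free_perm perm
  (coPieri_order_free cp s_gt1 u_s (middle_ends_at mid) (middle_rems_leq mid)).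
have mid_v := middle_perm perm mid.
have [S_p S_q] := Std_lifts free mid_v (ltac:(lia)); rewrite v_s in S_p S_q.
split=> //; rewrite -v_s; exact: Std_plus_of_order_free free (middle_ends_at mid_v).
Qed.

Theorem lemma4p20 (la nu : seq nat) (s : nat) :
  is_part la -> is_part nu -> coPieri la nu s ->
  exists N : nat, forall n : nat, (N <= n)%N ->
  (* shape of the elements of Std_s(nu_[n] \ alpha) and Std_s(alpha \ la_[n]) *)
      (forall al, is_part al -> sumn al = (n - s)%N ->
         pcontained al (pmeet (part_n n la) (part_n n nu)) ->
         (forall p, Std s al (part_n n nu) p ->
            forall st, st \in p -> st.1 = 0%N /\ (1 <= st.2)%N) /\
         (forall q, Std s (part_n n la) al q ->
            forall st, st \in q -> (1 <= st.1)%N /\ st.2 = 0%N)) /\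
      (* phi_s maps the disjoint union into Std^+_s(nu \ la) ... *)
      (forall x, phi_dom n s la nu x -> Std_plus s la nu (phi x.1.2 x.2)) /\
      (* ... injectively ... *)
      (forall x y, phi_dom n s la nu x -> phi_dom n s la nu y ->
         phi x.1.2 x.2 = phi y.1.2 y.2 -> x = y) /\
      (* ... and surjectively *)
      (forall u, Std_plus s la nu u ->
         exists x, phi_dom n s la nu x /\ phi x.1.2 x.2 = u) /\
      (* compatibility with interchanging consecutive integral steps *)
      (forall al p q, phi_dom n s la nu (al, p, q) ->
         forall k, (1 <= k <= s - 1)%N ->
         [/\ Std s al (part_n n nu) (swap_steps k p),
             Std s (part_n n la) al (swap_steps k q),
             phi (swap_steps k p) (swap_steps k q) = swap_steps k (phi p q)
           & Std_plus s la nu (swap_steps k (phi p q))]) /\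
      (* hence u_{k<->k+1} exists for u in Std^0_s(nu \ la) *)
      (forall u, Std_zero s la nu u ->
         forall k, (1 <= k <= s - 1)%N -> Std s la nu (swap_steps k u)).
Proof.
move=> la_part nu_part cp; exists (2 * (sumn la + sumn nu) + s) => n n_large.
have [la_n nu_n s_n] : [/\ sumn la <= n, sumn nu <= n & s <= n] by split; lia.
have spec al p q := @phi_dom_spec n s la nu al p q la_n nu_n s_n.
split.
  move=> al _ al_sum _; split=> [p S_p | q S_q].
    by apply: Std_pure_adds S_p _; rewrite /= al_sum; lia.
  by apply: Std_pure_rems S_q _; rewrite /= al_sum; lia.
split.
  move=> [[al p] q] dom; have [al_part _ _ _ _] := dom.
  have [u [u_s -> -> mid]] := spec _ _ _ dom.
  rewrite /= phi_lifts -u_s; apply: Std_plus_of_middle al_part nu_part _ mid.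
  by rewrite u_s.
split.
  move=> [[al p] q] [[al' p'] q'] dom dom'.
  have [al_part _ _ _ _] := dom; have [al'_part _ _ _ _] := dom'.
  have [u [_ -> -> mid]] := spec _ _ _ dom; have [u' [_ -> -> mid']] := spec _ _ _ dom'.
  rewrite /= !phi_lifts => uu'; rewrite -{}uu' in mid' *.
  by rewrite (middle_unique al_part al'_part mid mid').
split; first by move=> u; apply: phi_surj.
split.
  move=> al p q dom k k_range; have [u [u_s -> -> mid]] := spec _ _ _ dom.
  exact: swap_lifts.
by move=> u [u_plus _] k k_range; have [] := Std_plus_swap cp u_plus k_range.
Qed.
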